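(* Consider the iteration $\hat P_{i+1}=\mathcal H\big(\mathcal Q(\hat P_i)+\Delta Q_i\big)$, $i\in\mathbb Z_+$, with $\hat P_0\in\mathbb S^n_+$ and $\Delta Q_i\in\mathbb S^{n+m}$, and let $\|\Delta Q\|_\infty=\sup_i\|\Delta Q_i\|_2$. For every $\hat P_0\in\mathbb S^n_+$ there exist $d^*>0$, a $\mathcal{KL}$-function $\beta$ and a $\mathcal K$-function $\tilde\gamma$ such that whenever $\|\Delta Q\|_\infty<d^*$ the iteration is well defined and $$\|\hat P_i-P^*\|_2\le\beta(\|\hat P_0-P^*\|_2,i)+\tilde\gamma(\|\Delta Q\|_\infty)\quad\text{for all } i\in\mathbb Z_+.$$
   Context: Let $n,m\ge 1$, $A\in\mathbb R^{n\times n}$, $B\in\mathbb R^{n\times m}$, $S\in\mathbb S^n_{++}$, $R\in\mathbb S^m_{++}$, with $(A,B)$ stabilizable. Here $\mathbb S^n$, $\mathbb S^n_+$, $\mathbb S^n_{++}$ denote the real symmetric, symmetric positive semidefinite, and symmetric positive definite $n\times n$ matrices; $\|\cdot\|_2$ is the spectral norm. For $P\in\mathbb S^n_+$ define the Hamiltonian $\mathcal Q(P)=\begin{pmatrix}A^\top PA+S & A^\top PB\\ B^\top PA & B^\top PB+R\end{pmatrix}\in\mathbb S^{n+m}$. For $Q\in\mathbb R^{(n+m)\times(n+m)}$ partitioned as $Q=\begin{pmatrix}[Q]_{xx} & [Q]_{ux}^\top\\ [Q]_{ux} & [Q]_{uu}\end{pmatrix}$ with $[Q]_{xx}\in\mathbb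 R^{n\times n}$, $[Q]_{uu}\in\mathbb R^{m\times m}$ invertible, define the Schur complement $\mathcal H(Q)=[Q]_{xx}-[Q]_{ux}^\top[Q]_{uu}^{-1}[Q]_{ux}$. $P^*\in\mathbb S^n_{++}$ denotes the unique positive definite solution of $P=\mathcal H(\mathcal Q(P))$ (the discrete algebraic Riccati equation). Class $\mathcal K$: continuous, strictly increasing functions $\mathbb R_+\to\mathbb R_+$ vanishing at $0$. Class $\mathcal{KL}$: $\beta:\mathbb R_+\times\mathbb Z_+\to\mathbb R_+$ with $\beta(\cdot,i)\in\mathcal K$ for each $i$ and $\beta(r,i)\downarrow0$ as $i\to\infty$ for each $r\ge0$. *)

From HB Require Import structures.
From mathcomp Require Import all_boot all_order all_algebra.
From mathcomp Require Import all_classical all_reals all_analysis.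
From mathcomp Require Import complex.
Set Implicit Arguments. Unset Strict Implicit. Unset Printing Implicit Defensive.
Import Order.TTheory GRing.Theory Num.Theory numFieldNormedType.Exports.
Local Open Scope classical_set_scope.
Local Open Scope ring_scope.

Section Defs.
Variable R : realType.

Definition vnorm2 {k : nat} (x : 'cV[R]_k) : R :=
  Num.sqrt (\sum_(i < k) (x i 0) ^+ 2).

Definition specnorm {p q : nat} (M : 'M[R]_(p, q)) : R :=
  sup [set vnorm2 (M *m x) | x in [set x : 'cV[R]_q | vnorm2 x <= 1]].

Definition symmx {k : nat} (P : 'M[R]_k) : Prop := P^T = P.

Definition psd {k : nat} (P : 'M[R]_k) : Prop :=
  symmx P /\ forall x : 'cV[R]_k, 0 <= (x^T *m P *m x) 0 0.

Definition posdef {k : nat} (P : 'M[R]_k) : Prop :=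
  symmx P /\ forall x : 'cV[R]_k, x != 0 -> 0 < (x^T *m P *m x) 0 0.

Definition schur_stable {k : nat} (M : 'M[R]_k) : Prop :=
  forall lam : R[i],
    root (char_poly (map_mx (fun a : R => (a%:C)%C) M)) lam -> `|lam| < 1.

Definition stabilizable {n m : nat} (A : 'M[R]_n) (B : 'M[R]_(n, m)) : Prop :=
  exists K : 'M[R]_(m, n), schur_stable (A + B *m K).

Definition Qham {n m : nat} (A : 'M[R]_n) (B : 'M[R]_(n, m))
  (S : 'M[R]_n) (Rc : 'M[R]_m) (P : 'M[R]_n) : 'M[R]_(n + m) :=
  block_mx (A^T *m P *m A + S) (A^T *m P *m B)
           (B^T *m P *m A) (B^T *m P *m B + Rc).

(* blocks of Q = [[Q_xx, Q_ux^T],[Q_ux, Q_uu]] *)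
Definition blk_xx {n m : nat} (Q : 'M[R]_(n + m)) : 'M[R]_n := ulsubmx Q.
Definition blk_ux {n m : nat} (Q : 'M[R]_(n + m)) : 'M[R]_(m, n) := dlsubmx Q.
Definition blk_uu {n m : nat} (Q : 'M[R]_(n + m)) : 'M[R]_m := drsubmx Q.

(* Schur complement H(Q) (meaningful when blk_uu Q is invertible) *)
Definition Hschur {n m : nat} (Q : 'M[R]_(n + m)) : 'M[R]_n :=
  blk_xx Q - (blk_ux Q)^T *m invmx (blk_uu Q) *m blk_ux Q.

Fixpoint Phat {n m : nat} (A : 'M[R]_n) (B : 'M[R]_(n, m))
  (S : 'M[R]_n) (Rc : 'M[R]_m) (P0 : 'M[R]_n)
  (dQ : nat -> 'M[R]_(n + m)) (i : nat) : 'M[R]_n :=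
  match i with
  | O => P0
  | i'.+1 => Hschur (Qham A B S Rc (Phat A B S Rc P0 dQ i') + dQ i')
  end.

(* ||dQ||_oo = sup_i ||dQ_i||_2 (used together with a boundedness hypothesis) *)
Definition supnorm {p : nat} (dQ : nat -> 'M[R]_p) : R :=
  sup [set specnorm (dQ i) | i in [set: nat]].

Definition classK (f : R -> R) : Prop :=
  {within [set x : R | 0 <= x], continuous f} /\
  (forall x y, 0 <= x -> x < y -> f x < f y) /\
  f 0 = 0 /\ (forall x, 0 <= x -> 0 <= f x).

Definition classKL (beta : R -> nat -> R) : Prop :=
  (forall i, classK (fun r => beta r i)) /\
  (forall r, 0 <= r ->
     (forall i, beta r i.+1 <= beta r i) /\
     ((fun i => beta r i) @ \oo --> (0 : R))).

End Defs.

(* Since S is positive definite, S >= delta P* for some 0 < delta < 1, and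
   a perturbation D with |x^T D x| <= e mu |x|^2 (mu bounding S and R from
   below) is a relative perturbation of size e of Q(P) whenever P >= 0.
   Suppose (1 - t) P* <= P <= (1 + t) P*.  Comparing the quadratic forms of
   H(Q(P) + D) and of P*, each evaluated at the optimal feedback of the other
   problem, and using S >= delta P* to absorb the state cost, gives
   (1 - t') P* <= H(Q(P) + D) <= (1 + t') P* with t' = (1 + e)(1 - delta) t + e.
   For e < delta / 2 this is a contraction with rate
   rho = (1 - delta)(1 + delta / 2) < 1, so t_i <= rho^i t_0 + e / (1 - rho);
   both terms are linear in ||P0 - P*|| and ||dQ||, which yields the KL and K
   estimates. *)

From HB Require Import structures.
From mathcomp Require Import all_boot all_order all_algebra.
From mathcomp Require Import all_classical all_reals all_analysis.
From mathcomp Require Import complex.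
From mathcomp Require Import ring lra.
Import Order.TTheory GRing.Theory Num.Theory numFieldNormedType.Exports.
Set Implicit Arguments. Unset Strict Implicit. Unset Printing Implicit Defensive.
Local Open Scope classical_set_scope.
Local Open Scope ring_scope.

Section QuadraticForm.
Variable R : realType.

Definition qf {k : nat} (M : 'M[R]_k) (x : 'cV[R]_k) : R := (x^T *m M *m x) 0 0.
Definition bl {k l : nat} (x : 'cV[R]_k) (M : 'M[R]_(k, l)) (y : 'cV[R]_l) : R :=
  (x^T *m M *m y) 0 0.
Definition sqnorm {k : nat} (x : 'cV[R]_k) : R := (x^T *m x) 0 0.

Lemma qfD k (M N : 'M[R]_k) x : qf (M + N) x = qf M x + qf N x.
Proof. by rewrite /qf mulmxDr mulmxDl mxE. Qed.

Lemma qfB k (M N : 'M[R]_k) x : qf (M - N) x = qf M x - qf N x.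
Proof. by rewrite qfD /qf mulmxN mulNmx [X in _ + X]mxE. Qed.

Lemma qf0 k (x : 'cV[R]_k) : qf 0 x = 0.
Proof. by rewrite /qf mulmx0 mul0mx mxE. Qed.

Lemma qfv0 k (M : 'M[R]_k) : qf M 0 = 0.
Proof. by rewrite /qf mulmx0 mxE. Qed.

Lemma qfZv k (M : 'M[R]_k) a x : qf M (a *: x) = a ^+ 2 * qf M x.
Proof.
rewrite /qf [(a *: x)^T]linearZ /= -scalemxAr -!scalemxAl !mxE.
by rewrite mulrA -expr2.
Qed.

Lemma qf_mulmx k l (C : 'M[R]_(k, l)) (M : 'M[R]_k) x :
  qf (C^T *m M *m C) x = qf M (C *m x).
Proof. by rewrite /qf trmx_mul !mulmxA. Qed.

Lemma bl_tr k l (x : 'cV[R]_k) M (y : 'cV[R]_l) : bl x M y = bl y M^T x.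
Proof.
rewrite /bl; have -> : y^T *m M^T *m x = (x^T *m M *m y)^T.
  by rewrite !trmx_mul trmxK mulmxA.
by rewrite [RHS]mxE.
Qed.

Lemma sqnorm_qf k (x : 'cV[R]_k) : sqnorm x = qf 1%:M x.
Proof. by rewrite /qf mulmx1. Qed.

Lemma qfDv k (M : 'M[R]_k) x y :
  qf M (x + y) = qf M x + bl x M y + bl y M x + qf M y.
Proof. by rewrite /qf /bl [(x + y)^T]linearD /= !mulmxDl !mulmxDr !mxE; lra. Qed.

Lemma qfNv k (M : 'M[R]_k) x : qf M (- x) = qf M x.
Proof. by rewrite -scaleN1r qfZv sqrrN expr1n mul1r. Qed.

Lemma blZr k l (x : 'cV[R]_k) (M : 'M[R]_(k, l)) a y : bl x M (a *: y) = a * bl x M y.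
Proof. by rewrite /bl -scalemxAr mxE. Qed.

Lemma blZl k l (x : 'cV[R]_k) (M : 'M[R]_(k, l)) a y : bl (a *: x) M y = a * bl x M y.
Proof. by rewrite bl_tr blZr -bl_tr. Qed.

Lemma blNr k l (x : 'cV[R]_k) (M : 'M[R]_(k, l)) y : bl x M (- y) = - bl x M y.
Proof. by rewrite -scaleN1r blZr mulN1r. Qed.

Lemma blNl k l (x : 'cV[R]_k) (M : 'M[R]_(k, l)) y : bl (- x) M y = - bl x M y.
Proof. by rewrite -scaleN1r blZl mulN1r. Qed.

Lemma qf_polar k (M : 'M[R]_k) x y : symmx M ->
  qf M (x + y) - qf M (x - y) = 4 * bl x M y.
Proof. by move=> sM; rewrite !qfDv qfNv blNl blNr (bl_tr y) sM; lra. Qed.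

Lemma qf_block k l (a : 'M[R]_k) (b : 'M[R]_(k, l)) c (d : 'M[R]_l) x u :
  qf (block_mx a b c d) (col_mx x u) = qf a x + bl x b u + bl u c x + qf d u.
Proof.
by rewrite /qf /bl tr_col_mx mul_row_block mul_row_col !mulmxDl !mxE; lra.
Qed.

Lemma sqnorm_col k l (x : 'cV[R]_k) (u : 'cV[R]_l) :
  sqnorm (col_mx x u) = sqnorm x + sqnorm u.
Proof. by rewrite /sqnorm tr_col_mx mul_row_col mxE. Qed.

Lemma sqnormE k (x : 'cV[R]_k) : sqnorm x = \sum_i x i 0 ^+ 2.
Proof. by rewrite /sqnorm mxE; apply: eq_bigr => i _; rewrite mxE expr2. Qed.

Lemma sqnorm0 k : sqnorm (0 : 'cV[R]_k) = 0.
Proof. by rewrite /sqnorm mulmx0 mxE. Qed.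

Lemma sqnorm_ge0 k (x : 'cV[R]_k) : 0 <= sqnorm x.
Proof. by rewrite sqnormE; apply: sumr_ge0 => i _; apply: sqr_ge0. Qed.

Lemma sqnorm_eq0 k (x : 'cV[R]_k) : (sqnorm x == 0) = (x == 0).
Proof.
apply/idP/eqP => [|->]; last by rewrite sqnorm0.
rewrite sqnormE psumr_eq0 => [/allP h|i _]; last exact: sqr_ge0.
apply/matrixP => i j; rewrite (ord1 j) mxE; apply/eqP.
by rewrite -sqrf_eq0; apply: (implyP (h i (mem_index_enum i))).
Qed.

Lemma sqnorm_gt0 k (x : 'cV[R]_k) : x != 0 -> 0 < sqnorm x.
Proof. by rewrite lt_def sqnorm_ge0 sqnorm_eq0 andbT. Qed.

Lemma sqnormBD k (x y : 'cV[R]_k) :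
  sqnorm (x + y) + sqnorm (x - y) = 2 * (sqnorm x + sqnorm y).
Proof. by rewrite !sqnorm_qf !qfDv qfNv blNl blNr; lra. Qed.

Lemma cauchy_schwarz k (x y : 'cV[R]_k) : bl x 1%:M y ^+ 2 <= sqnorm x * sqnorm y.
Proof.
have [->|ny] := eqVneq y 0; first by rewrite /bl mulmx0 mxE expr0n mulr_ge0 ?sqnorm_ge0.
have sy := sqnorm_gt0 ny; set t := bl x 1%:M y / sqnorm y.
have := sqnorm_ge0 (x - t *: y).
rewrite !sqnorm_qf qfDv qfNv qfZv blNl blNr blZl blZr (bl_tr y) trmx1 -!sqnorm_qf.
move=> h; rewrite -subr_ge0; have -> : sqnorm x * sqnorm y - bl x 1%:M y ^+ 2 = sqnorm y *
  (sqnorm x + - (t * bl x 1%:M y) + - (t * bl x 1%:M y) + t ^+ 2 * sqnorm y).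
  by rewrite /t; field; rewrite gt_eqF.
by rewrite mulr_ge0 // ltW.
Qed.

End QuadraticForm.

Section EuclideanNorm.
Variable R : realType.

Lemma vnorm2E k (x : 'cV[R]_k) : vnorm2 x = Num.sqrt (sqnorm x).
Proof. by rewrite /vnorm2 sqnormE. Qed.

Lemma vnorm2_ge0 k (x : 'cV[R]_k) : 0 <= vnorm2 x.
Proof. exact: sqrtr_ge0. Qed.

Lemma sqr_vnorm2 k (x : 'cV[R]_k) : vnorm2 x ^+ 2 = sqnorm x.
Proof. by rewrite vnorm2E sqr_sqrtr // sqnorm_ge0. Qed.

Lemma vnorm2_eq0 k (x : 'cV[R]_k) : (vnorm2 x == 0) = (x == 0).
Proof. by rewrite vnorm2E sqrtr_eq0 le_eqVlt ltNge sqnorm_ge0 orbF sqnorm_eq0. Qed.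

Lemma vnorm2Z k a (x : 'cV[R]_k) : vnorm2 (a *: x) = `|a| * vnorm2 x.
Proof. by rewrite !vnorm2E !sqnorm_qf qfZv sqrtrM ?sqr_ge0 // sqrtr_sqr. Qed.

Lemma vnorm2_normalize k (x : 'cV[R]_k) : x != 0 ->
  vnorm2 ((vnorm2 x)^-1 *: x) = 1.
Proof.
rewrite -vnorm2_eq0 => nx.
by rewrite vnorm2Z ger0_norm ?invr_ge0 ?vnorm2_ge0 // mulVf.
Qed.

Lemma vnorm2_le1 k (x : 'cV[R]_k) : (vnorm2 x <= 1) = (sqnorm x <= 1).
Proof. by rewrite -sqr_vnorm2 -{2}(expr1n R 2) ler_pXn2r ?nnegrE ?vnorm2_ge0. Qed.

Lemma bl1_le k (x y : 'cV[R]_k) : `|bl x 1%:M y| <= vnorm2 x * vnorm2 y.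
Proof.
rewrite !vnorm2E -sqrtrM ?sqnorm_ge0 // -sqrtr_sqr.
exact/ler_wsqrtr/cauchy_schwarz.
Qed.

Lemma specnorm_has_ubound p q (M : 'M[R]_(p, q)) :
  has_ubound [set vnorm2 (M *m x) | x in [set x | vnorm2 x <= 1]].
Proof.
set C := \sum_i sqnorm (row i M)^T.
exists (Num.sqrt C) => _ [x /= x1 <-]; rewrite vnorm2E; apply: ler_wsqrtr.
rewrite vnorm2_le1 in x1; rewrite sqnormE.
apply: (@le_trans _ _ (C * sqnorm x)); last first.
  by rewrite ler_piMr ?sumr_ge0 // => i _; apply: sqnorm_ge0.
rewrite mulr_suml; apply: ler_sum => i _.
have -> : (M *m x) i 0 = bl (row i M)^T 1%:M x.
  by rewrite /bl trmxK mulmx1 -row_mul [RHS]mxE.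
exact: cauchy_schwarz.
Qed.

Lemma specnorm_ub p q (M : 'M[R]_(p, q)) x : vnorm2 x <= 1 ->
  vnorm2 (M *m x) <= specnorm M.
Proof. by move=> x1; apply: (ub_le_sup (specnorm_has_ubound M)); exists x. Qed.

Lemma specnorm_ge0 p q (M : 'M[R]_(p, q)) : 0 <= specnorm M.
Proof.
apply: le_trans (specnorm_ub M (x := 0) _).
  by rewrite mulmx0 vnorm2_ge0.
by rewrite vnorm2E sqnorm0 sqrtr0.
Qed.

Lemma vnorm2_mulmx_le p q (M : 'M[R]_(p, q)) x :
  vnorm2 (M *m x) <= specnorm M * vnorm2 x.
Proof.
have [->|nx] := eqVneq x 0.
  by rewrite mulmx0 !vnorm2E !sqnorm0 sqrtr0 mulr0.
have px : 0 < vnorm2 x by rewrite lt_def vnorm2_eq0 nx vnorm2_ge0.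
have := @specnorm_ub _ _ M ((vnorm2 x)^-1 *: x).
rewrite vnorm2_normalize // lexx => /(_ isT).
rewrite -scalemxAr vnorm2Z ger0_norm ?invr_ge0 ?vnorm2_ge0 //.
by rewrite ler_pdivrMl // mulrC.
Qed.

Lemma qf_le_specnorm k (M : 'M[R]_k) x : `|qf M x| <= specnorm M * sqnorm x.
Proof.
have -> : qf M x = bl x 1%:M (M *m x) by rewrite /qf /bl mulmx1 mulmxA.
apply: (le_trans (bl1_le _ _)).
rewrite -sqr_vnorm2 expr2 mulrA [_ * vnorm2 x]mulrC.
by rewrite ler_wpM2l ?vnorm2_ge0 ?vnorm2_mulmx_le.
Qed.

Lemma specnorm_le_qf k (M : 'M[R]_k) c : symmx M -> 0 <= c ->
  (forall x, `|qf M x| <= c * sqnorm x) -> specnorm M <= c.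
Proof.
move=> sM c0 hM; apply: ge_sup.
  by exists 0, 0; rewrite ?mulmx0 /= vnorm2E sqnorm0 sqrtr0.
move=> _ [x /= x1 <-]; set w := M *m x.
have [-> //|nw] := eqVneq w 0; first by rewrite vnorm2E sqnorm0 sqrtr0.
set y := (vnorm2 w)^-1 *: w.
have y1 : sqnorm y = 1 by rewrite -sqr_vnorm2 vnorm2_normalize ?expr1n.
have bl_xy : bl x M y = vnorm2 w.
  have xMw : x^T *m M = w^T by rewrite /w trmx_mul sM.
  rewrite blZr /bl xMw -/(sqnorm w) -sqr_vnorm2 expr2 mulrA mulVf ?mul1r //.
  by rewrite vnorm2_eq0.
have := qf_polar x y sM; rewrite bl_xy.
have := hM (x + y); have := hM (x - y); rewrite !ler_norml => /andP[h1 _] /andP[_ h2].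
have := sqnormBD x y; rewrite y1; rewrite vnorm2_le1 in x1.
nra.
Qed.
End EuclideanNorm.

Section UnitSphere.
Variable R : realType.

Lemma continuous_sum (T : topologicalType) (I : Type) (r : seq I) (F : I -> T -> R) :
  (forall i, continuous (F i)) -> continuous (fun t => \sum_(i <- r) F i t).
Proof.
move=> hF; elim: r => [|a r IH] /=.
  by under eq_fun do rewrite big_nil; exact: cst_continuous.
under eq_fun do rewrite big_cons.
by move=> t; apply: continuousD (hF a t) (IH t).
Qed.

Lemma continuous_qf k (M : 'M[R]_k) : continuous (fun v : 'rV[R]_k => qf M v^T).
Proof.
have -> : (fun v : 'rV[R]_k => qf M v^T) =
          (fun v => \sum_j (\sum_i v 0 i * M i j) * v 0 j).
  apply: funext => v; rewrite /qf trmxK mxE; apply: eq_bigr => j _; rewrite !mxE.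
  by congr (_ * _); apply: eq_bigr => i _; rewrite mxE.
apply: continuous_sum => j v; apply: continuousM; last exact: coord_continuous.
apply: continuous_sum => i w; apply: continuousM; first exact: coord_continuous.
exact: cst_continuous.
Qed.

Lemma unit_sphere_bounded k : bounded_set [set v : 'rV[R]_k | sqnorm v^T = 1].
Proof.
rewrite /bounded_set /= /bounded_near; near=> M => v v1 /=.
rewrite [X in X <= _]/Num.norm /= mx_normrE.
apply: (@le_trans _ _ 1); last by near: M; apply: nbhs_pinfty_ge.
elim/big_ind: _ => //; first by move=> a b ha hb; rewrite ge_max ha hb.
move=> [i j] _ /=; rewrite (ord1 i) -sqrtr_sqr -sqrtr1; apply: ler_wsqrtr.
rewrite -v1 sqnormE (bigD1 j) //= mxE ler_wpDr //.
by apply: sumr_ge0 => l _; apply: sqr_ge0.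
Unshelve. all: by end_near.
Qed.

Lemma unit_sphere_compact k : compact [set v : 'rV[R]_k | sqnorm v^T = 1].
Proof.
apply: bounded_closed_compact; first exact: unit_sphere_bounded.
have -> : [set v : 'rV[R]_k | sqnorm v^T = 1] =
          (fun v => qf 1%:M v^T) @^-1` [set 1].
  by apply: funext => v; rewrite /preimage /= sqnorm_qf.
by apply: (continuous_closedP _).1; [exact: continuous_qf | exact: closed_eq].
Qed.

(* [l] is the minimum of [qf P] on the compact unit sphere. *)
Lemma posdef_ge_sqnorm k (P : 'M[R]_k) : posdef P ->
  exists2 l, 0 < l & forall x, l * sqnorm x <= qf P x.
Proof.
case: k P => [|k] P [_ hP].
  exists 1 => // x; have -> : x = 0 by apply/matrixP => -[].
  by rewrite qfv0 sqnorm0 mulr0.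
have sphere0 : [set v : 'rV[R]_k.+1 | sqnorm v^T = 1] !=set0.
  have nz1 : const_mx 1 != 0 :> 'cV[R]_k.+1.
    by apply/eqP => /matrixP /(_ 0 0) /eqP; rewrite !mxE oner_eq0.
  exists ((vnorm2 (const_mx 1 : 'cV[R]_k.+1))^-1 *: const_mx 1)^T.
  by rewrite /= trmxK -sqr_vnorm2 (vnorm2_normalize nz1) expr1n.
have [c /[!inE] /= c1 cmin] := EVT_min_rV sphere0 (@unit_sphere_compact k.+1)
  (continuous_subspaceT (continuous_qf (M := P))).
have nc : c^T != 0 by rewrite -sqnorm_eq0 c1 oner_eq0.
exists (qf P c^T); first exact: hP.
move=> x; have [->|nx] := eqVneq x 0; first by rewrite qfv0 sqnorm0 mulr0.
have nv : vnorm2 x != 0 by rewrite vnorm2_eq0.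
have -> : qf P x = sqnorm x * qf P ((vnorm2 x)^-1 *: x).
  by rewrite qfZv -sqr_vnorm2 mulrA -exprMn mulfV ?expr1n ?mul1r.
rewrite mulrC ler_wpM2l ?sqnorm_ge0 //; have := cmin ((vnorm2 x)^-1 *: x)^T.
by rewrite trmxK inE /= trmxK -sqr_vnorm2 vnorm2_normalize ?expr1n //; apply.
Qed.
End UnitSphere.

Section SchurComplement.
Variables (R : realType) (n m : nat).
Implicit Type Q : 'M[R]_(n + m).

Lemma qf_blk_uu Q u : qf (blk_uu Q) u = qf Q (col_mx 0 u).
Proof.
rewrite -{2}(submxK Q) qf_block /qf /bl /blk_uu.
by rewrite trmx0 !mul0mx !mulmx0 !mxE; lra.
Qed.

Lemma Hschur_sym Q : symmx Q -> symmx (Hschur Q).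
Proof.
move=> sQ; have sQuu : (blk_uu Q)^T = blk_uu Q by rewrite trmx_drsub sQ.
rewrite /symmx /Hschur linearB /= /blk_xx trmx_ulsub sQ.
by rewrite !trmx_mul trmxK trmx_inv sQuu mulmxA.
Qed.

Lemma qf_Hschur_complete Q x u : symmx Q -> blk_uu Q \in unitmx ->
  qf Q (col_mx x u) =
  qf (Hschur Q) x + qf (blk_uu Q) (u + invmx (blk_uu Q) *m blk_ux Q *m x).
Proof.
move=> sQ uQ; have sQuu : (blk_uu Q)^T = blk_uu Q by rewrite trmx_drsub sQ.
have sQur : ursubmx Q = (blk_ux Q)^T by rewrite trmx_dlsub sQ.
rewrite -{1}(submxK Q) qf_block qfDv sQur /Hschur qfB.
rewrite /qf /bl !trmx_mul trmx_inv sQuu !mulmxA.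
rewrite -!(mulmxA _ (blk_uu Q) (invmx (blk_uu Q))) mulmxV // mulmx1.
rewrite -!(mulmxA _ (invmx (blk_uu Q)) (blk_uu Q)) mulVmx // !mulmx1.
by rewrite /blk_xx /blk_ux /blk_uu; lra.
Qed.

Definition schur_gain Q : 'M[R]_(m, n) := - (invmx (blk_uu Q) *m blk_ux Q).

Lemma qf_Hschur Q x : symmx Q -> blk_uu Q \in unitmx ->
  qf (Hschur Q) x = qf Q (col_mx x (schur_gain Q *m x)).
Proof.
by move=> sQ uQ; rewrite qf_Hschur_complete // /schur_gain mulNmx addNr qfv0 addr0.
Qed.

Lemma qf_Hschur_le Q x u : symmx Q -> blk_uu Q \in unitmx ->
  (forall v, 0 <= qf (blk_uu Q) v) -> qf (Hschur Q) x <= qf Q (col_mx x u).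
Proof. by move=> sQ uQ uu_ge0; rewrite qf_Hschur_complete // lerDl. Qed.

End SchurComplement.

Lemma unitmx_qf_gt0 (R : realType) k (M : 'M[R]_k) :
  (forall u, u != 0 -> 0 < qf M u) -> M \in unitmx.
Proof.
move=> hM; rewrite unitmxE unitfE; apply/negP => /det0P [v nv vM].
have nvt : v^T != 0 by rewrite -(inj_eq (@trmx_inj _ _ _)) trmxK trmx0.
by have := hM _ nvt; rewrite /qf trmxK vM mul0mx mxE ltxx.
Qed.

Section ComparisonFunctions.
Variable R : realType.

Lemma classK_scale (c : R) : 0 < c -> classK (fun r => c * r).
Proof.
move=> c0; split; first exact/continuous_subspaceT/mulrl_continuous.
split; first by move=> x y _ xy; rewrite ltr_pM2l.
by split=> [|x x0]; rewrite ?mulr0 // mulr_ge0 // ltW.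
Qed.

Lemma classKL_geometric (c rho : R) : 0 < c -> 0 < rho -> rho < 1 ->
  classKL (fun r i => c * rho ^+ i * r).
Proof.
move=> c0 rho0 rho1; split=> [i|r r0].
  by apply: classK_scale; rewrite mulr_gt0 // exprn_gt0.
split=> [i|].
  rewrite exprS mulrCA -!mulrA ler_piMl ?(ltW rho1) //.
  by rewrite !mulr_ge0 // ?exprn_ge0 // ltW.
have -> : (fun i => c * rho ^+ i * r) = geometric (c * r) rho :> (nat -> R).
  by apply: funext => i /=; rewrite mulrAC.
by apply: cvg_geometric; rewrite ger0_norm // ltW.
Qed.

End ComparisonFunctions.

Definition qf_bounded (R : realType) k (D : 'M[R]_k) (c : R) :=
  forall z, `|qf D z| <= c * sqnorm z.

Definition rel_close (R : realType) k (P Ps : 'M[R]_k) (t : R) :=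
  forall y, `|qf (P - Ps) y| <= t * qf Ps y.

Lemma rel_close_bounds (R : realType) k (P Ps : 'M[R]_k) t : rel_close P Ps t ->
  forall y, (1 - t) * qf Ps y <= qf P y /\ qf P y <= (1 + t) * qf Ps y.
Proof.
by move=> hP y; have := hP y; rewrite qfB ler_norml => /andP[h1 h2]; split; lra.
Qed.

Lemma rel_close_le (R : realType) k (P Ps : 'M[R]_k) t t' : psd Ps -> t <= t' ->
  rel_close P Ps t -> rel_close P Ps t'.
Proof.
by move=> [_ Ps_ge0] tt' hP y; apply: le_trans (hP y) _; rewrite ler_wpM2r ?Ps_ge0.
Qed.

Section SpectralBounds.
Variable R : realType.

Lemma posdef_psd k (P : 'M[R]_k) : posdef P -> psd P.
Proof.
move=> [sP P_gt0]; split=> // x.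
by have [->|/P_gt0/ltW] := eqVneq x 0; rewrite ?mulmx0 ?mxE.
Qed.

Lemma posdef_ge_sqnorm2 k l (S : 'M[R]_k) (Rc : 'M[R]_l) : posdef S -> posdef Rc ->
  exists2 mu, 0 < mu &
    (forall x, mu * sqnorm x <= qf S x) /\ (forall u, mu * sqnorm u <= qf Rc u).
Proof.
move=> /posdef_ge_sqnorm [lS lS0 S_ge] /posdef_ge_sqnorm [lR lR0 Rc_ge].
exists (Num.min lS lR); first by rewrite lt_min lS0 lR0.
split=> [x|u]; [apply: le_trans (S_ge x) | apply: le_trans (Rc_ge u)].
  by rewrite ler_wpM2r ?sqnorm_ge0 ?ge_min ?lexx.
by rewrite ler_wpM2r ?sqnorm_ge0 ?ge_min ?lexx ?orbT.
Qed.

Lemma posdef_dominates k (S P : 'M[R]_k) : posdef S ->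
  exists2 delta, 0 < delta < 1 & forall x, delta * qf P x <= qf S x.
Proof.
move=> /posdef_ge_sqnorm [l l0 S_ge]; set L := specnorm P + 1 + l.
have L0 : 0 < L by rewrite /L; have := specnorm_ge0 P; lra.
exists (l / L).
  by rewrite divr_gt0 // ltr_pdivrMr // mul1r /L; have := specnorm_ge0 P; lra.
move=> x; apply: le_trans (S_ge x); rewrite -mulrA ler_wpM2l ?(ltW l0) //.
rewrite mulrC ler_pdivrMr // mulrC.
apply: le_trans (ler_norm _) (le_trans (qf_le_specnorm _ _) _).
by rewrite ler_wpM2r ?sqnorm_ge0 // /L; have := specnorm_ge0 P; lra.
Qed.

Lemma rel_close_specnorm k (P Ps : 'M[R]_k) l : 0 < l ->
  (forall x, l * sqnorm x <= qf Ps x) -> rel_close P Ps (specnorm (P - Ps) / l).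
Proof.
move=> l0 Ps_ge y; apply: le_trans (qf_le_specnorm _ _) _.
have -> : specnorm (P - Ps) * sqnorm y = specnorm (P - Ps) / l * (l * sqnorm y).
  by field; rewrite gt_eqF.
by rewrite ler_wpM2l ?divr_ge0 ?specnorm_ge0 ?(ltW l0).
Qed.

Lemma specnorm_rel_close k (P Ps : 'M[R]_k) t : symmx P -> psd Ps -> 0 <= t ->
  rel_close P Ps t -> specnorm (P - Ps) <= t * specnorm Ps.
Proof.
move=> sP [sPs Ps_ge0] t0 hP; apply: specnorm_le_qf.
- by rewrite /symmx linearB /= sP sPs.
- by rewrite mulr_ge0 ?specnorm_ge0.
move=> x; apply: le_trans (hP x) _; rewrite -mulrA ler_wpM2l //.
exact: le_trans (ler_norm _) (qf_le_specnorm _ _).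
Qed.

Lemma specnorm_le_supnorm p (dQ : nat -> 'M[R]_p) :
  (exists M, forall i, specnorm (dQ i) <= M) -> forall i, specnorm (dQ i) <= supnorm dQ.
Proof.
move=> [M dQ_le] i; apply: ub_le_sup; last by exists i.
by exists M => _ [j _ <-].
Qed.

End SpectralBounds.

Definition contraction_rate (R : realType) (delta : R) := (1 - delta) * (1 + delta / 2).

Lemma contraction_rate_gt0 (R : realType) (delta : R) :
  0 <= delta < 1 -> 0 < contraction_rate delta.
Proof. by case/andP=> d0 d1; rewrite /contraction_rate mulr_gt0 //; lra. Qed.

Lemma contraction_rate_ge0 (R : realType) (delta : R) :
  0 <= delta <= 1 -> 0 <= contraction_rate delta.
Proof. by case/andP=> d0 d1; rewrite /contraction_rate mulr_ge0 //; lra. Qed.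

Lemma contraction_rate_lt1 (R : realType) (delta : R) :
  0 < delta <= 1 -> contraction_rate delta < 1.
Proof. by case/andP=> d0 d1; rewrite /contraction_rate; nra. Qed.

Section RiccatiMap.
Variables (R : realType) (n m : nat) (A : 'M[R]_n) (B : 'M[R]_(n, m))
  (S : 'M[R]_n) (Rc : 'M[R]_m) (mu : R).
Hypotheses (sS : symmx S) (sRc : symmx Rc) (mu_gt0 : 0 < mu)
  (S_ge : forall x, mu * sqnorm x <= qf S x)
  (Rc_ge : forall u, mu * sqnorm u <= qf Rc u).

Local Notation Q := (Qham A B S Rc).

Lemma qf_Qham P x u :
  qf (Q P) (col_mx x u) = qf P (A *m x + B *m u) + qf S x + qf Rc u.
Proof.
rewrite /Qham qf_block qfDv !qfD -!qf_mulmx /bl !trmx_mul !mulmxA; lra.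
Qed.

Lemma Qham_sym P : symmx P -> symmx (Q P).
Proof.
move=> sP; rewrite /symmx /Qham tr_block_mx.
by rewrite !linearD /= !trmx_mul !trmxK sP sS sRc !mulmxA.
Qed.

Lemma Qham_ge P : psd P -> forall z, mu * sqnorm z <= qf (Q P) z.
Proof.
move=> [_ P_ge0] z; rewrite -(vsubmxK z) qf_Qham sqnorm_col.
have := P_ge0 (A *m usubmx z + B *m dsubmx z).
have := S_ge (usubmx z); have := Rc_ge (dsubmx z); rewrite /qf; lra.
Qed.

Section Perturbation.
Variables (P : 'M[R]_n) (D : 'M[R]_(n + m)) (e : R).
Hypotheses (psdP : psd P) (sD : symmx D) (hD : qf_bounded D (e * mu))
  (e_ge0 : 0 <= e) (e_lt1 : e < 1).

Lemma Qham_perturb_sym : symmx (Q P + D).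
Proof. by rewrite /symmx linearD /= Qham_sym ?sD //; case: psdP. Qed.

Lemma Qham_perturb_bounds z :
  (1 - e) * qf (Q P) z <= qf (Q P + D) z /\ qf (Q P + D) z <= (1 + e) * qf (Q P) z.
Proof.
have : `|qf D z| <= e * qf (Q P) z.
  by apply: le_trans (hD z) _; rewrite -mulrA ler_wpM2l ?Qham_ge.
by rewrite qfD ler_norml => /andP[h1 h2]; split; lra.
Qed.

Lemma Qham_perturb_uu_ge u : (1 - e) * (mu * sqnorm u) <= qf (blk_uu (Q P + D)) u.
Proof.
rewrite qf_blk_uu; apply: le_trans (Qham_perturb_bounds _).1.
rewrite ler_wpM2l ?subr_ge0 ?(ltW e_lt1) //; apply: le_trans (Qham_ge psdP _).
by rewrite sqnorm_col sqnorm0 add0r.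
Qed.

Lemma Qham_perturb_uu_ge0 u : 0 <= qf (blk_uu (Q P + D)) u.
Proof.
apply: le_trans (Qham_perturb_uu_ge u).
by rewrite !mulr_ge0 ?sqnorm_ge0 ?subr_ge0 ?(ltW e_lt1) ?(ltW mu_gt0).
Qed.

Lemma Qham_perturb_uu_unit : blk_uu (Q P + D) \in unitmx.
Proof.
apply: unitmx_qf_gt0 => u nu; apply: lt_le_trans (Qham_perturb_uu_ge u).
by rewrite !mulr_gt0 ?subr_gt0 ?sqnorm_gt0.
Qed.

End Perturbation.

Variables (Ps : 'M[R]_n) (delta : R).
Hypotheses (psdPs : psd Ps) (dare : Ps = Hschur (Q Ps))
  (delta_gt0 : 0 < delta) (delta_le1 : delta <= 1)
  (S_ge_Ps : forall x, delta * qf Ps x <= qf S x).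

Let Ps_ge0 y : 0 <= qf Ps y. Proof. by case: psdPs => _ /(_ y). Qed.

Let D0 : qf_bounded (0 : 'M[R]_(n + m)) (0 * mu).
Proof. by move=> z; rewrite qf0 normr0 !mul0r. Qed.

Let QPs_sym : symmx (Q Ps).
Proof. by have := Qham_perturb_sym psdPs (trmx0 _ _ _); rewrite addr0. Qed.

Let QPs_uu_unit : blk_uu (Q Ps) \in unitmx.
Proof. by have := Qham_perturb_uu_unit psdPs D0 (lexx 0) ltr01; rewrite addr0. Qed.

Lemma qf_Qham_Ps_ge x u : qf Ps x <= qf (Q Ps) (col_mx x u).
Proof.
have := Qham_perturb_uu_ge0 psdPs D0 (lexx 0) ltr01; rewrite addr0 => uu_ge0.
by rewrite {1}dare qf_Hschur_le.
Qed.

Lemma qf_Qham_Ps_gain x : qf Ps x = qf (Q Ps) (col_mx x (schur_gain (Q Ps) *m x)).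
Proof. by rewrite {1}dare qf_Hschur. Qed.

Lemma riccati_lower P D e a : psd P -> symmx D -> qf_bounded D (e * mu) ->
  0 <= e -> e < 1 -> 0 <= a -> a <= 1 -> (forall y, a * qf Ps y <= qf P y) ->
  forall x, (1 - e) * (a + (1 - a) * delta) * qf Ps x <= qf (Hschur (Q P + D)) x.
Proof.
move=> psdP sD hD e0 e1 a0 a1 Ps_le_P x.
have sQ := Qham_perturb_sym psdP sD.
have uQ := Qham_perturb_uu_unit psdP hD e0 e1.
rewrite qf_Hschur //.
set u := schur_gain _ *m x; set y := A *m x + B *m u.
apply: le_trans (Qham_perturb_bounds psdP hD e0 _).1.
rewrite -mulrA ler_wpM2l ?subr_ge0 ?(ltW e1) // qf_Qham -/y.
have Ps_opt := qf_Qham_Ps_ge x u; rewrite qf_Qham -/y in Ps_opt.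
have := Ps_le_P y.
have : a * qf Ps x <= a * (qf Ps y + qf S x + qf Rc u) by rewrite ler_wpM2l.
have : (1 - a) * (delta * qf Ps x) <= (1 - a) * qf S x.
  by rewrite ler_wpM2l ?subr_ge0.
have : (1 - a) * qf Rc u >= 0.
  by rewrite mulr_ge0 ?subr_ge0 // (le_trans _ (Rc_ge u)) // mulr_ge0 ?sqnorm_ge0 ?ltW.
lra.
Qed.

Lemma riccati_upper P D e b : psd P -> symmx D -> qf_bounded D (e * mu) ->
  0 <= e -> e < 1 -> 1 <= b -> (forall y, qf P y <= b * qf Ps y) ->
  forall x, qf (Hschur (Q P + D)) x <= (1 + e) * (1 + (b - 1) * (1 - delta)) * qf Ps x.
Proof.
move=> psdP sD hD e0 e1 b1 P_le_Ps x.
have sQ := Qham_perturb_sym psdP sD.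
have uQ := Qham_perturb_uu_unit psdP hD e0 e1.
set u := schur_gain (Q Ps) *m x; set y := A *m x + B *m u.
apply: le_trans (qf_Hschur_le x u sQ uQ (Qham_perturb_uu_ge0 psdP hD e0 e1)) _.
apply: le_trans (Qham_perturb_bounds psdP hD e0 _).2 _.
rewrite -mulrA ler_wpM2l ?addr_ge0 // qf_Qham -/y.
have Ps_opt := qf_Qham_Ps_gain x; rewrite qf_Qham -/u -/y in Ps_opt.
have := P_le_Ps y.
have : (b - 1) * (delta * qf Ps x) <= (b - 1) * qf S x.
  by rewrite ler_wpM2l ?subr_ge0.
have : (b - 1) * qf Rc u >= 0.
  by rewrite mulr_ge0 ?subr_ge0 // (le_trans _ (Rc_ge u)) // mulr_ge0 ?sqnorm_ge0 ?ltW.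
have : b * qf Ps x = b * (qf Ps y + qf S x + qf Rc u) by rewrite -Ps_opt.
lra.
Qed.

Lemma riccati_rel_close P D e t : psd P -> symmx D -> qf_bounded D (e * mu) ->
  0 <= e -> e < 1 -> 0 <= t -> rel_close P Ps t ->
  psd (Hschur (Q P + D)) /\
  rel_close (Hschur (Q P + D)) Ps ((1 + e) * (1 - delta) * t + e).
Proof.
move=> psdP sD hD e0 e1 t0 hP; have [_ P_ge0] := psdP.
have [a [a0 a1 Ps_le_P a_t]] : exists a, [/\ 0 <= a, a <= 1,
    forall y, a * qf Ps y <= qf P y & 1 - a <= t].
  have [t1|t1] := lerP t 1.
    exists (1 - t); split; [lra | lra | | lra].
    by move=> y; have [] := rel_close_bounds hP y.
  by exists 0; split=> // [y|]; rewrite ?mul0r ?subr0 ?P_ge0 // ltW.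
have lo := riccati_lower psdP sD hD e0 e1 a0 a1 Ps_le_P.
have b1 : 1 <= 1 + t by rewrite lerDl.
have up := riccati_upper psdP sD hD e0 e1 b1 (fun y => (rel_close_bounds hP y).2).
set cL := (1 - e) * _ in lo; set cU := (1 + e) * _ in up.
set T := (1 + e) * (1 - delta) * t + e.
have cL_ge0 : 0 <= cL.
  apply: mulr_ge0; first by rewrite subr_ge0 ltW.
  by rewrite addr_ge0 // mulr_ge0 ?subr_ge0 // ltW.
have cL_T : 1 - cL <= T.
  have : 0 <= e * ((1 - a) * (1 - delta)) by rewrite !mulr_ge0 ?subr_ge0.
  have : (1 - a) * (1 - delta) <= t * (1 - delta) by rewrite ler_wpM2r ?subr_ge0.
  have : t * (1 - delta) <= (1 + e) * (1 - delta) * t.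
    by rewrite [t * _]mulrC ler_wpM2r // ler_peMl ?subr_ge0 ?lerDl.
  rewrite /cL /T; lra.
have cU_T : cU = 1 + T by rewrite /cU /T; ring.
split.
  split; first exact/Hschur_sym/Qham_perturb_sym.
  by move=> y; apply: le_trans (lo y); rewrite mulr_ge0.
move=> y; have := ler_wpM2r (Ps_ge0 y) cL_T; have := lo y; have := up y.
rewrite qfB ler_norml cU_T !mulrBl !mulrDl !mul1r => h1 h2 h3.
by apply/andP; split; lra.
Qed.

Lemma Phat_rel_close P0 dQ e t0 : psd P0 -> 0 <= t0 -> rel_close P0 Ps t0 ->
  (forall i, symmx (dQ i)) -> (forall i, qf_bounded (dQ i) (e * mu)) ->
  0 <= e -> e < delta / 2 ->
  forall i, psd (Phat A B S Rc P0 dQ i) /\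
    rel_close (Phat A B S Rc P0 dQ i) Ps
      (contraction_rate delta ^+ i * t0 + e / (1 - contraction_rate delta)).
Proof.
move=> psdP0 t0_ge0 hP0 sdQ hdQ e0 e_lt; set rho := contraction_rate delta.
(* Restated so that [lra] recognises the instances. *)
have d0 : 0 < delta := delta_gt0; have d1 : delta <= 1 := delta_le1.
have rho_lt1 : rho < 1 by rewrite contraction_rate_lt1 ?d0.
have rho_ge0 : 0 <= rho by rewrite contraction_rate_ge0 ?d1 ?ltW.
have E_ge0 : 0 <= e / (1 - rho) by rewrite divr_ge0 // subr_ge0 ltW.
have e1 : e < 1 by lra.
elim=> [|i [psdPi hPi]].
  by split=> //; apply: rel_close_le hP0 => //; rewrite expr0 mul1r lerDl.
set T := rho ^+ i * t0 + e / (1 - rho).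
have T_ge0 : 0 <= T by rewrite addr_ge0 // mulr_ge0 // exprn_ge0.
have [psdPi1 hPi1] := riccati_rel_close psdPi (sdQ i) (hdQ i) e0 e1 T_ge0 hPi.
split=> //; apply: rel_close_le hPi1 => //.
have rate : (1 + e) * (1 - delta) <= rho.
  by rewrite /rho /contraction_rate mulrC ler_wpM2l ?lerD2l ?subr_ge0 // ltW.
have -> : rho ^+ i.+1 * t0 + e / (1 - rho) = rho * T + e.
  by rewrite /T exprS; field; rewrite subr_eq0 gt_eqF.
by rewrite lerD2r ler_wpM2r.
Qed.

Lemma Phat_specnorm_bound P0 dQ s l : psd P0 -> 0 < l ->
  (forall x, l * sqnorm x <= qf Ps x) -> (forall i, symmx (dQ i)) ->
  (forall i, specnorm (dQ i) <= s) -> s < mu * delta / 2 ->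
  forall i, blk_uu (Q (Phat A B S Rc P0 dQ i) + dQ i) \in unitmx /\
    specnorm (Phat A B S Rc P0 dQ i - Ps) <=
    (contraction_rate delta ^+ i * (specnorm (P0 - Ps) / l) +
     s / mu / (1 - contraction_rate delta)) * specnorm Ps.
Proof.
move=> psdP0 l0 Ps_ge sdQ dQ_le s_lt i.
have s0 : 0 <= s := le_trans (specnorm_ge0 _) (dQ_le 0%N).
have d1 : delta <= 1 := delta_le1.
have e0 : 0 <= s / mu by rewrite divr_ge0 // ltW.
have e_lt : s / mu < delta / 2 by rewrite ltr_pdivrMr // mulrC mulrA.
have e1 : s / mu < 1 by apply: lt_trans e_lt _; rewrite ltr_pdivrMr //; lra.
have hdQ j : qf_bounded (dQ j) (s / mu * mu).
  by rewrite divfK ?gt_eqF // => z; apply: le_trans (qf_le_specnorm _ _) _;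
    rewrite ler_wpM2r ?sqnorm_ge0.
have t0 : 0 <= specnorm (P0 - Ps) / l by rewrite divr_ge0 ?specnorm_ge0 ?ltW.
have [psdPi hPi] := Phat_rel_close psdP0 t0 (rel_close_specnorm P0 l0 Ps_ge)
  sdQ hdQ e0 e_lt i.
split; first exact: (Qham_perturb_uu_unit psdPi (hdQ i) e0 e1).
apply: specnorm_rel_close psdPi.1 psdPs _ hPi.
have d0 : 0 < delta := delta_gt0.
have rho_lt1 : contraction_rate delta < 1 by rewrite contraction_rate_lt1 ?d0.
have rho_ge0 : 0 <= contraction_rate delta by rewrite contraction_rate_ge0 ?d1 ?ltW.
apply: addr_ge0; first by rewrite mulr_ge0 ?exprn_ge0.
by rewrite divr_ge0 // subr_ge0 ltW.
Qed.

End RiccatiMap.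


Theorem proposition4 (R : realType) (n m : nat) (A : 'M[R]_n)
  (B : 'M[R]_(n, m)) (S : 'M[R]_n) (Rc : 'M[R]_m)
  (Pstar : 'M[R]_n) :
  (0 < n)%N -> (0 < m)%N ->
  posdef S -> posdef Rc -> stabilizable A B ->
  posdef Pstar -> Pstar = Hschur (Qham A B S Rc Pstar) ->
  forall P0 : 'M[R]_n, psd P0 ->
  exists dstar : R, 0 < dstar /\
  exists beta : R -> nat -> R, classKL beta /\
  exists gamma : R -> R, classK gamma /\
  forall dQ : nat -> 'M[R]_(n + m),
    (forall i, symmx (dQ i)) ->
    (exists M : R, forall i, specnorm (dQ i) <= M) ->
    supnorm dQ < dstar ->
    forall i : nat,
      blk_uu (Qham A B S Rc (Phat A B S Rc P0 dQ i) + dQ i) \in unitmx /\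
      specnorm (Phat A B S Rc P0 dQ i - Pstar)
        <= beta (specnorm (P0 - Pstar)) i + gamma (supnorm dQ).
Proof.
move=> _ _ pdS pdRc _ pdPs dare P0 psdP0.
have [[sS _] [sRc _]] := (pdS, pdRc); have psdPs := posdef_psd pdPs.
have [mu mu0 [S_ge Rc_ge]] := posdef_ge_sqnorm2 pdS pdRc.
have [lP lP0 Ps_ge] := posdef_ge_sqnorm pdPs.
have [delta /andP[d0 d1] S_ge_Ps] := posdef_dominates Pstar pdS.
set rho := contraction_rate delta.
have rho0 : 0 < rho by rewrite contraction_rate_gt0 ?ltW ?d0.
have rho1 : rho < 1 by rewrite contraction_rate_lt1 ?d0 ?ltW.
set L := specnorm Pstar + 1; have L0 : 0 < L by rewrite ltr_pwDr ?specnorm_ge0.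
exists (mu * delta / 2); split; first by rewrite !divr_gt0 ?mulr_gt0.
exists (fun r i => L / lP * rho ^+ i * r); split.
  by apply: classKL_geometric; rewrite ?divr_gt0.
exists (fun s => L / (mu * (1 - rho)) * s); split.
  by apply: classK_scale; rewrite divr_gt0 ?mulr_gt0 ?subr_gt0.
move=> dQ sdQ dQ_bd s_lt i.
have [uQ Pi_le] := Phat_specnorm_bound sS sRc mu0 S_ge Rc_ge psdPs dare d0 (ltW d1)
  S_ge_Ps psdP0 lP0 Ps_ge sdQ (specnorm_le_supnorm dQ_bd) s_lt i.
split=> //; apply: le_trans Pi_le _; rewrite -/rho.
have -> : L / lP * rho ^+ i * specnorm (P0 - Pstar) + L / (mu * (1 - rho)) * supnorm dQ
    = (rho ^+ i * (specnorm (P0 - Pstar) / lP) + supnorm dQ / mu / (1 - rho)) * L.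
  by field; rewrite subr_eq0 !gt_eqF.
have s0 := le_trans (specnorm_ge0 _) (specnorm_le_supnorm dQ_bd 0%N).
rewrite ler_wpM2l ?lerDl //; apply: addr_ge0.
  by rewrite mulr_ge0 ?exprn_ge0 ?divr_ge0 ?specnorm_ge0 ?(ltW rho0) ?(ltW lP0).
by rewrite !divr_ge0 ?subr_ge0 ?(ltW mu0) ?(ltW rho1).
Qed.
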